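(* Let $\mathcal U$ be a fine Ramsey ultrafilter on $\mathbb N^{<\omega}$. Then the condition $$X\approx Y\iff\{F\in\mathbb N^{<\omega}:S_X(\mathbf x_F)=S_Y(\mathbf x_F)\}\in\mathcal U\qquad(X,Y\in\mathbb W)$$ defines a natural equinumerosity $\approx$ on $\mathbb W$. The corresponding set of numerosities $\mathbb N^{\mathbb N^{<\omega}}/\mathcal U$ is isomorphic to the ultrapower $\mathbb N^{\mathbb N}/\sigma\mathcal U$, where $\sigma:\mathbb N^{<\omega}\to\mathbb N$ is $\sigma(F)=|F|$ and $\sigma\mathcal U=\{A\subseteq\mathbb N:\sigma^{-1}[A]\in\mathcal U\}$. This equinumerosity is characterized by $\mathcal U$-congruences, i.e. for $X,Y\in\mathbb W$, $X\approx Y$ iff there exists a $\mathcal U$-congruence between $X$ and $Y$. Finally, it becomes asymptotic after a suitable reordering of $\mathbb N$: there is a permutation $\pi$ of $\mathbb N$ such that, writing $G_m=\pi[\{0,\dots,m\}]$, for every $S$ in the gauge ideal $\mathfrak I=\{S\in\mathcal R:\ \{F: S(\mathbf x_F)=0\}\in\mathcal U\}$ and every $k$ there is $m$ with $\{0,\dots,k\}\subseteq G_m$ and $S(\mathbf x_{G_m})=0$.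
   Context: Let $\mathbb N=\{0,1,2,\dots\}$, $\mathbb N^{<\omega}$ the set of finite subsets of $\mathbb N$. $\mathbb{W}$ is the family of finitary point sets: sets $A\subseteq\bigcup_{k\ge1}\mathbb N^k$ of finite tuples of natural numbers such that for every $n$ there is $h$ with $A\cap\{0,\dots,n\}^k=\emptyset$ for all $k>h$. Cartesian products are identified with concatenations; $\{n\}$ is the set whose only element is the 1-tuple $(n)$; $A,B\in\mathbb W$ are multipliable if distinct pairs $(a,b)\in A\times B$ have distinct concatenations. Given an equivalence relation $\approx$ on $\mathbb W$, $A\succ B$ (equivalently $B\prec A$) means there exist $A',B'\in\mathbb W$ with $B'\subsetneq A'$, $A\approx A'$, $B\approx B'$. An equinumerosity is an equivalence relation on $\mathbb W$ such that for all $A,B\in\mathbb W$: (AP) $A\approx B$ iff $A\setminus B\approx B\setminus A$; (ZP) exactly one of $A\approx B$, $A\succ B$, $A\prec B$ holds; (TP) if $T$ is injective on $A$ and $T(a)$ is a permutation of the coordinates of $a$ for every $a\in A$, then $A\approx T[A]$; (UP) $A\times\{n\}\approx A$ for all $n$; (PP) if $A,B$ are multipliable, $A',B'$ are multipliable, $A\approx A'$, $B\approx B'$, then $A\times B\approx A'\times B'$. It is natural if whenever $T$ is injective on $X\in\mathbb W$ and the set of components of $T(x)$ equals that of $x$ for all $x\in X$, then $X\approx T[X]$. Series: indeterminates $t_0,t_1,\dots$; $\mathbf A$ the eventually zero sequences $\mathbf a$ of non-negative integers; $t^{\mathbf a}=\prod_it_i^{a_i}$; $\mathcal R$ is the ring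 of formal series $S=\sum n_{\mathbf a}t^{\mathbf a}$ ($n_{\mathbf a}\in\mathbb Z$) for which there are $d_n\in\mathbb N$ with $n_{\mathbf a}=0$ whenever $a_n>d_n$ for some $n$, and $b\in\mathbb N$ with $|n_{\mathbf a}|\le b(\sum_ia_i)!/\prod_ia_i!$. For a tuple $x=(x_1,\dots,x_d)$, $t_x=t^{\mathbf a}$ with $a_i=|\{j:x_j=i\}|$; $S_X=\sum_{x\in X}t_x$, $S_\emptyset=0$. $S(\mathbf x)$ is the value of $S$ when $x_n$ is assigned to $t_n$. For $F\in\mathbb N^{<\omega}$, $\mathbf x_F$ is the $0$-$1$ sequence with $\mathbf x_F(n)=1$ iff $n\in F$; note $S_X(\mathbf x_F)=|X_F|$ where $X_F=X\cap\bigcup_{n}F^n$. An ultrafilter $\mathcal U$ on $\mathbb N^{<\omega}$ is fine if it contains every $\{F:n\in F\}$, $n\in\mathbb N$; it is Ramsey if for every partition of the set of 2-element subsets of $\mathbb N^{<\omega}$ into two classes there is a set in $\mathcal U$ all of whose 2-element subsets lie in the same class. For $X,Y\in\mathbb W$, a $\mathcal U$-congruence between $X$ and $Y$ is an injective map $\tau:X\to Y$ such that $\{F\in\mathbb N^{<\omega}:\tau[X_F]=Y_F\}\in\mathcal U$. *)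

From mathcomp Require Import all_boot all_order all_algebra.
From mathcomp Require Import finmap.
Set Implicit Arguments. Unset Strict Implicit. Unset Printing Implicit Defensive.
Import GRing.Theory Num.Theory.
Local Open Scope fset_scope.

Definition pset := seq nat -> Prop.

(** The fsfamily W of finitary point sets: sets of (nonempty) tuples such that
    for every n there is h with A ∩ {0..n}^k = ∅ for all k > h. *)
Definition finitary (A : pset) : Prop :=
  (forall x, A x -> x <> [::]) /\
  forall n, exists h, forall x, A x -> (h < size x)%N -> exists2 i, i \in x & (n < i)%N.

Definition setD (A B : pset) : pset := fun x => A x /\ ~ B x.
Definition psubset (B A : pset) : Prop :=
  (forall x, B x -> A x) /\ exists x, A x /\ ~ B x.
Definition image (T : seq nat -> seq nat) (A : pset) : pset :=
  fun y => exists2 x, A x & T x = y.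
Definition injective_on (T : seq nat -> seq nat) (A : pset) : Prop :=
  forall x y, A x -> A y -> T x = T y -> x = y.
(** Cartesian product identified with concatenation. *)
Definition prodp (A B : pset) : pset :=
  fun z => exists a b, [/\ A a, B b & z = a ++ b].
Definition single (n : nat) : pset := fun x => x = [:: n].
Definition multipliable (A B : pset) : Prop :=
  forall a b a' b', A a -> B b -> A a' -> B b' -> a ++ b = a' ++ b' -> a = a' /\ b = b'.

Section Equinumerosity.
Variable E : pset -> pset -> Prop.

Definition succ_rel (A B : pset) : Prop :=
  exists A' B', [/\ finitary A', finitary B', psubset B' A', E A A' & E B B'].

Definition equiv_on_W : Prop :=
  (forall A, finitary A -> E A A) /\
  (forall A B, finitary A -> finitary B -> E A B -> E B A) /\
  (forall A B C, finitary A -> finitary B -> finitary C -> E A B -> E B C -> E A C).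

Definition AP : Prop := forall A B, finitary A -> finitary B ->
  (E A B <-> E (setD A B) (setD B A)).
Definition ZP : Prop := forall A B, finitary A -> finitary B ->
  [\/ E A B /\ ~ succ_rel A B /\ ~ succ_rel B A,
      ~ E A B /\ succ_rel A B /\ ~ succ_rel B A
    | ~ E A B /\ ~ succ_rel A B /\ succ_rel B A].
Definition TP : Prop := forall A (T : seq nat -> seq nat), finitary A ->
  injective_on T A -> (forall a, A a -> perm_eq (T a) a) -> E A (image T A).
Definition UP : Prop := forall A n, finitary A -> E (prodp A (single n)) A.
Definition PP : Prop := forall A B A' B', finitary A -> finitary B ->
  finitary A' -> finitary B' -> multipliable A B -> multipliable A' B' ->
  E A A' -> E B B' -> E (prodp A B) (prodp A' B').

Definition equinumerosity : Prop := [/\ equiv_on_W, AP, ZP, TP & UP /\ PP].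

Definition natural : Prop := forall X (T : seq nat -> seq nat), finitary X ->
  injective_on T X -> (forall x, X x -> T x =i x) -> E X (image T X).
End Equinumerosity.

Definition fsets := {fset nat}.
Definition fsfamily := (fsets -> Prop) -> Prop.

Definition is_ultrafilter (U : fsfamily) : Prop :=
  [/\ U (fun _ => True), ~ U (fun _ => False),
      (forall A B, U A -> U B -> U (fun F => A F /\ B F)),
      (forall A B : fsets -> Prop, U A -> (forall F, A F -> B F) -> U B)
    & (forall A, U A \/ U (fun F => ~ A F))].

Definition is_fine (U : fsfamily) : Prop := forall n : nat, U (fun F => n \in F).

(** Ramsey: every 2-colouring of the 2-element subsets {F,G} (a symmetric
    colouring c) has a homogeneous set in U. *)
Definition is_ramsey (U : fsfamily) : Prop :=
  forall c : fsets -> fsets -> bool, (forall F G, c F G = c G F) ->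
  exists2 A, U A & exists b, forall F G, A F -> A G -> F != G -> c F G = b.

Definition has_card (A : pset) (n : nat) : Prop :=
  exists s : seq (seq nat), [/\ uniq s, size s = n & forall x, A x <-> x \in s].

Definition restr (X : pset) (F : fsets) : pset := fun x => X x /\ all (fun i => i \in F) x.

(** X ≈ Y iff {F : S_X(x_F) = S_Y(x_F)} ∈ U, using S_X(x_F) = |X_F|. *)
Definition approxU (U : fsfamily) (X Y : pset) : Prop :=
  U (fun F => exists n, has_card (restr X F) n /\ has_card (restr Y F) n).

Definition Ucongruence (U : fsfamily) (tau : seq nat -> seq nat) (X Y : pset) : Prop :=
  [/\ forall x, X x -> Y (tau x), injective_on tau X &
      U (fun F => forall y, restr Y F y <-> exists2 x, restr X F x & tau x = y)].

Definition sigmaU (U : fsfamily) (A : nat -> Prop) : Prop := U (fun F => A #|` F|).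

(** Formal series: monomials t^a (a eventually zero) are represented by the
    sorted list containing i with multiplicity a_i; a series is its
    coefficient function. *)
Definition series := seq nat -> int.

Definition multinom (s : seq nat) : nat :=
  (size s)`! %/ \prod_(n <- undup s) (count_mem n s)`!.

Definition inR (S : series) : Prop :=
  [/\ (forall s, S s != 0%R -> sorted leq s),
      (exists d : nat -> nat, forall s n, (d n < count_mem n s)%N -> S s = 0%R)
    & (exists b : nat, forall s, sorted leq s -> (absz (S s) <= b * multinom s)%N)].

(** [evalF S P v]: S(x_F) = v, where F is given by the predicate P
    (x_F(n) = 1 iff P n); S(x_F) is the (finite) sum of the coefficients of the
    monomials whose variables all lie in F. *)
Definition evalF (S : series) (P : pred nat) (v : int) : Prop :=
  exists L : seq (seq nat),
    [/\ uniq L, (forall s, s \in L -> all P s),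
        (forall s, all P s -> S s != 0%R -> s \in L)
      & v = (\sum_(s <- L) S s)%R].

From mathcomp Require Import all_boot all_order all_algebra.
From mathcomp Require Import finmap zify boolp.
Set Implicit Arguments. Unset Strict Implicit. Unset Printing Implicit Defensive.
Local Open Scope fset_scope.

(* A Ramsey ultrafilter contains a chain F_0 ⊂ F_1 ⊂ ... of finite sets (colour pairs by
   comparability under inclusion), and along it a point set X is described by the nested finite
   sets X_{F_j}.  Modulo U, X ≈ Y only compares the counts |X_F|, which gives AP, TP, UP, PP and
   naturality at once.  If |X_F| = |Y_F| along the chain, matching the successive differences
   X_{F_j} \ X_{F_{j-1}} and Y_{F_j} \ Y_{F_{j-1}} element by element is a U-congruence.  For ZP,
   a second colouring makes |A_F| - |B_F| nondecreasing along the chain, so that B embeds block by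
   block into A as a proper subset with the same counts.  Since |F| is injective on the chain,
   every function of F agrees modulo U with a function of |F| (the ultrapower isomorphism), and
   listing N in the order in which its elements enter the chain gives π, the G_m running through
   the F_j. *)

Definition fchain (P : fsets -> Prop) :=
  forall F G, P F -> P G -> F `<=` G \/ G `<=` F.

Lemma fchain_sub (P Q : fsets -> Prop) :
  (forall F, Q F -> P F) -> fchain P -> fchain Q.
Proof. by move=> QP cP F G /QP PF /QP PG; apply: cP. Qed.

Lemma fchain_card_le (P : fsets -> Prop) F G : fchain P -> P F -> P G ->
  (#|` F| <= #|` G|)%N -> F `<=` G.
Proof.
move=> cP PF PG le; case: (cP F G PF PG) => // GF.
have /eqP -> : G == F by rewrite eqEfcard GF.
exact: fsubset_refl.
Qed.

Lemma fchain_card_inj (P : fsets -> Prop) F G : fchain P -> P F -> P G ->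
  #|` F| = #|` G| -> F = G.
Proof.
move=> cP PF PG e; apply/eqP; rewrite eqEfsubset.
by rewrite !(fchain_card_le cP) // e.
Qed.

Section Ultrafilter.
Variable U : fsfamily.
Hypothesis U_ultra : is_ultrafilter U.

Lemma ultraT : U (fun _ => True).
Proof. by case: U_ultra. Qed.

Lemma ultraS (A B : fsets -> Prop) : U A -> (forall F, A F -> B F) -> U B.
Proof. by case: U_ultra => _ _ _ + _; apply. Qed.

Lemma ultraW (A : fsets -> Prop) : (forall F, A F) -> U A.
Proof. by move=> A_all; apply: (ultraS ultraT) => F _; apply: A_all. Qed.

Lemma ultraI (A B : fsets -> Prop) : U A -> U B -> U (fun F => A F /\ B F).
Proof. by case: U_ultra => _ _ + _ _; apply. Qed.

Lemma ultra_em (A : fsets -> Prop) : U A \/ U (fun F => ~ A F).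
Proof. by case: U_ultra. Qed.

Lemma ultra_ex (A : fsets -> Prop) : U A -> exists F, A F.
Proof.
move=> UA; apply: contrapT => noA; case: U_ultra => _ + _ _ _; apply.
by apply: (ultraS (B := fun _ => False) UA) => F AF; apply: noA; exists F.
Qed.

Lemma ultra_disjoint (A B : fsets -> Prop) :
  U A -> (forall F, A F -> B F -> False) -> ~ U B.
Proof. by move=> UA AB UB; have [F []] := ultra_ex (ultraI UA UB); apply: AB. Qed.

Hypothesis U_fine : is_fine U.

Lemma fine_all (s : seq nat) : U (fun F => all (fun i => i \in F) s).
Proof.
elim: s => [|n s IHs]; first exact: ultraW.
by apply: (ultraS (ultraI (U_fine n) IHs)) => F /= [-> ->].
Qed.

Lemma fine_fsubset (F : fsets) : U (fun G => F `<=` G).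
Proof. by apply: (ultraS (fine_all F)) => G /allP FG; apply/fsubsetP. Qed.

Lemma fine_card_ge (m : nat) : U (fun G => m <= #|` G|)%N.
Proof.
apply: (ultraS (fine_fsubset [fset i | i in iota 0 m])) => G /fsubset_leq_card.
by rewrite card_fseq undup_id ?iota_uniq // size_iota.
Qed.

Hypothesis U_ramsey : is_ramsey U.

Lemma ramsey_fchain : exists2 P, U P & fchain P.
Proof.
pose c (F G : fsets) := (F `<=` G) || (G `<=` F).
have [|P UP [[] Pc]] := U_ramsey (c := c); first by move=> F G; rewrite /c orbC.
  exists P => // F G PF PG; have [<-|FG] := eqVneq F G; first by left.
  by move/orP: (Pc F G PF PG FG) => [] ?; [left | right].
have [F PF] := ultra_ex UP.
have [G [[PG FG] ltFG]] :=
  ultra_ex (ultraI (ultraI UP (fine_fsubset F)) (fine_card_ge #|` F|.+1)).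
have neFG : F != G by apply: contraTneq ltFG => <-; rewrite ltnn.
by move: (Pc F G PF PG neFG); rewrite /c FG.
Qed.

(* A decreasing colour class is impossible: it would yield an infinite descent of [g]. *)
Lemma ramsey_monotone (g : fsets -> nat) : exists2 Q, U Q &
  forall F G, Q F -> Q G -> (#|` F| < #|` G|)%N -> (g F <= g G)%N.
Proof.
pose c (F G : fsets) := if (#|` F| < #|` G|)%N then (g F <= g G)%N
  else if (#|` G| < #|` F|)%N then (g G <= g F)%N else true.
have c_sym F G : c F G = c G F by rewrite /c; case: ltngtP.
have [Q UQ [[] Qc]] := U_ramsey c_sym.
  exists Q => // F G QF QG lt; have neFG : F != G by apply: contraTneq lt => ->; rewrite ltnn.
  by move: (Qc F G QF QG neFG); rewrite /c lt.
have g_ge n F : Q F -> (n <= g F)%N.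
  elim: n F => // n IHn F QF.
  have [G [QG lt]] := ultra_ex (ultraI UQ (fine_card_ge #|` F|.+1)).
  have neFG : F != G by apply: contraTneq lt => <-; rewrite ltnn.
  move: (Qc F G QF QG neFG); rewrite /c lt => /negbT; rewrite -ltnNge.
  exact: leq_ltn_trans (IHn G QG).
have [F QF] := ultra_ex UQ.
by have := g_ge (g F).+1 F QF; rewrite ltnn.
Qed.


Section ChainEnumeration.
Variable P : fsets -> Prop.
Hypothesis UP : U P.
Hypothesis cP : fchain P.

Lemma exists_card_ge n :
  exists s, `[< exists F, [/\ P F, (n <= #|` F|)%N & #|` F| = s] >].
Proof.
have [F [PF le]] := ultra_ex (ultraI UP (fine_card_ge n)).
by exists #|` F|; apply/asboolP; exists F.
Qed.

Definition least_card_ge n : fsets :=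
  match pselect (exists F, [/\ P F, (n <= #|` F|)%N & #|` F| = ex_minn (exists_card_ge n)])
  with left H => proj1_sig (cid H) | right _ => fset0 end.

Lemma least_card_geP n : [/\ P (least_card_ge n), (n <= #|` least_card_ge n|)%N &
  forall F, P F -> (n <= #|` F|)%N -> (#|` least_card_ge n| <= #|` F|)%N].
Proof.
rewrite /least_card_ge; case: ex_minnP => s /asboolP exF s_min.
case: pselect => // exF'; case: (cid exF') => G /= [PG le eG]; split=> // F PF leF.
by rewrite eG; apply: s_min; apply/asboolP; exists F.
Qed.

Fixpoint fchain_enum j : fsets :=
  if j is i.+1 then least_card_ge #|` fchain_enum i|.+1 else least_card_ge 0.

Local Notation D := fchain_enum.

Lemma fchain_enumP j : P (D j).
Proof. by case: j => [|j]; [case: (least_card_geP 0) | case: (least_card_geP #|` D j|.+1)]. Qed.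

Lemma fchain_enum_card_lt j : (#|` D j| < #|` D j.+1|)%N.
Proof. by case: (least_card_geP #|` D j|.+1). Qed.

Lemma fchain_enum_card_ge j : (j <= #|` D j|)%N.
Proof. by elim: j => // j IHj; apply: leq_ltn_trans IHj (fchain_enum_card_lt j). Qed.

Lemma fchain_enum_card_mono : {homo (fun j => #|` D j|) : i j / (i < j)%N}.
Proof. exact: homo_ltn ltn_trans fchain_enum_card_lt. Qed.

Lemma fchain_enum_sub i j : (i <= j)%N -> D i `<=` D j.
Proof.
rewrite leq_eqVlt => /orP[/eqP-> | lt]; first exact: fsubset_refl.
exact: (fchain_card_le cP (fchain_enumP i) (fchain_enumP j) (ltnW (fchain_enum_card_mono lt))).
Qed.

Lemma fchain_enum_onto F : P F -> exists j, F = D j.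
Proof.
move=> PF; have [j] : exists j, (#|` F| <= #|` D j|)%N.
  by exists #|` F|; apply: fchain_enum_card_ge.
elim: j => [|j IHj] le.
  exists 0; apply: (fchain_card_inj cP PF (fchain_enumP 0)); apply/eqP.
  by rewrite eqn_leq le; case: (least_card_geP 0) => _ _ ->.
have [|lt] := leqP #|` F| #|` D j|; first exact: IHj.
exists j.+1; apply: (fchain_card_inj cP PF (fchain_enumP _)); apply/eqP.
by rewrite eqn_leq le; case: (least_card_geP #|` D j|.+1) => _ _ ->.
Qed.

Lemma fchain_enum_cover (x : seq nat) : exists j, all (fun i => i \in D j) x.
Proof.
have [F [PF /allP xF]] := ultra_ex (ultraI UP (fine_all x)).
by have [j eF] := fchain_enum_onto PF; exists j; apply/allP => i /xF; rewrite eF.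
Qed.

End ChainEnumeration.

End Ultrafilter.

Fixpoint seqs_bounded (h : nat) (l : seq nat) : seq (seq nat) :=
  if h is h'.+1 then [::] :: [seq a :: s | a <- l, s <- seqs_bounded h' l]
  else [:: [::]].

Lemma mem_seqs_bounded h l x :
  (x \in seqs_bounded h l) = (size x <= h)%N && all (fun i => i \in l) x.
Proof.
elim: h x => [|h IHh] [|a x] //=; rewrite in_cons /= ltnS.
apply/allpairsP/and3P => [[[b s] /= [bl + [-> ->]]] | [xh al xl]].
  by rewrite IHh => /andP[-> ->].
by exists (a, x); rewrite /= IHh xh xl.
Qed.

Lemma finitary_restr_fset (X : pset) F : finitary X ->
  exists S : {fset seq nat}, forall x, restr X F x <-> x \in S.
Proof.
case=> _ /(_ (\max_(i <- F) i)) [h Hh].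
exists [fset x in seqs_bounded h F | `[< X x >]] => x.
rewrite in_fset inE /= mem_seqs_bounded; split.
  case=> Xx /allP xF; apply/andP; split; last exact/asboolP.
  rewrite (introT allP xF) andbT leqNgt; apply/negP => /(Hh x Xx) [i /xF iF].
  by rewrite ltnNge (leq_bigmax_seq (F := id) i iF).
by case/andP => /andP[_ xF] /asboolP Xx.
Qed.

Definition restrf (X : pset) (F : fsets) : {fset seq nat} :=
  match pselect (exists S : {fset seq nat}, forall x, restr X F x <-> x \in S) with
  | left H => proj1_sig (cid H)
  | right _ => fset0
  end.

Lemma restrfP X F : finitary X -> forall x, restr X F x <-> x \in restrf X F.
Proof.
move=> fX; rewrite /restrf; case: pselect => [H|]; last by have := finitary_restr_fset F fX.
exact: proj2_sig (cid H).
Qed.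

Definition rcard X F := #|` restrf X F|.

Lemma has_card_fset (A : pset) (S : {fset seq nat}) :
  (forall x, A x <-> x \in S) -> has_card A #|` S|.
Proof. by move=> AS; exists S; split=> //; apply: fset_uniq. Qed.

Lemma has_card_rcard X F : finitary X -> has_card (restr X F) (rcard X F).
Proof. by move=> fX; apply/has_card_fset/restrfP. Qed.

Lemma has_card_uniq A n m : has_card A n -> has_card A m -> n = m.
Proof.
case=> s [us <- As] [t [ut <- At]]; apply/perm_size/uniq_perm => // x.
by apply/idP/idP => [/As/At|/At/As].
Qed.

Lemma rcardE X F n : finitary X -> has_card (restr X F) n -> rcard X F = n.
Proof. by move=> fX; apply: has_card_uniq (has_card_rcard F fX). Qed.

Lemma has_card_image (A B : pset) n (f : seq nat -> seq nat) : has_card A n ->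
  injective_on f A -> (forall y, B y <-> exists2 x, A x & f x = y) -> has_card B n.
Proof.
case=> s [us <- As] f_inj Bf; exists (map f s); split; rewrite ?size_map //.
  by rewrite map_inj_in_uniq // => x y /As Ax /As Ay; apply: f_inj.
by move=> y; rewrite Bf; split=> [[x /As xs <-]|/mapP[x /As Ax ->]]; [apply: map_f|exists x].
Qed.

Lemma has_card_prodp (A B : pset) F n m : multipliable A B ->
  has_card (restr A F) n -> has_card (restr B F) m -> has_card (restr (prodp A B) F) (n * m).
Proof.
move=> AB_mul [s [us <- As]] [t [ut <- Bt]].
exists [seq a ++ b | a <- s, b <- t]; split; rewrite ?size_allpairs //.
  apply: allpairs_uniq => // -[a b] [a' b'] /allpairsP[[x y] /= [/As[Ax _] /Bt[By _] [-> ->]]].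
  case/allpairsP=> [[x' y'] /= [/As[Ax' _] /Bt[By' _] [-> ->]]] /= e.
  by case: (AB_mul _ _ _ _ Ax By Ax' By' e) => -> ->.
move=> z; split=> [[[a [b [Aa Bb ->]]]] | /allpairsP[[a b] /= [/As[Aa aF] /Bt[Bb bF] ->]]].
  rewrite all_cat => /andP[aF bF]; apply/allpairsP.
  by exists (a, b); split=> //; [apply/As | apply/Bt].
by split; [exists a, b | rewrite all_cat aF bF].
Qed.

Lemma finitary_sub (A B : pset) : (forall x, B x -> A x) -> finitary A -> finitary B.
Proof.
move=> BA [A_ne A_fin]; split=> [x /BA|n]; first exact: A_ne.
by have [h Ah] := A_fin n; exists h => x /BA; apply: Ah.
Qed.

Lemma restrf_sub X F G : finitary X -> F `<=` G -> restrf X F `<=` restrf X G.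
Proof.
move=> fX /fsubsetP FG; apply/fsubsetP => x /(restrfP _ fX) [Xx /allP xF].
by apply/(restrfP _ fX); split=> //; apply/allP => i /xF /FG.
Qed.

Lemma restrf_subpset A B (F : fsets) : finitary A -> finitary B ->
  (forall x, A x -> B x) -> restrf A F `<=` restrf B F.
Proof.
move=> fA fB AB; apply/fsubsetP => x /(restrfP _ fA) [Ax xF].
by apply/(restrfP _ fB); split=> //; apply: AB.
Qed.

Lemma approxU_rcard U X Y : is_ultrafilter U -> finitary X -> finitary Y ->
  approxU U X Y <-> U (fun F => rcard X F = rcard Y F).
Proof.
move=> U_ultra fX fY; split=> UXY; apply: (ultraS U_ultra UXY) => F.
  by case=> n [XF YF]; rewrite (rcardE fX XF) (rcardE fY YF).
by move=> e; exists (rcard X F); rewrite {2}e; split; apply: has_card_rcard.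
Qed.

Lemma restrf_setD A B F : finitary A -> finitary B ->
  restrf (setD A B) F = restrf A F `\` restrf B F.
Proof.
move=> fA fB; have fAB : finitary (setD A B) by apply: finitary_sub fA => x [].
apply/fsetP => x; rewrite in_fsetD; apply/idP/andP.
  move/(restrfP _ fAB) => [[Ax nBx] xF]; split; last exact/(restrfP _ fA).
  by apply/negP => /(restrfP _ fB) [].
case=> /negP nBx /(restrfP _ fA) [Ax xF]; apply/(restrfP _ fAB); split=> //.
by split=> // Bx; apply: nBx; apply/(restrfP _ fB).
Qed.

Section CountingEquinumerosity.
Variable U : fsfamily.
Hypothesis U_ultra : is_ultrafilter U.
Hypothesis U_fine : is_fine U.

Lemma approxU_image X (T : seq nat -> seq nat) : finitary X -> injective_on T X ->
  (forall x, X x -> T x =i x) -> approxU U X (image T X).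
Proof.
move=> fX T_inj TX; apply: ultraW => // F.
exists (rcard X F); split; first exact: has_card_rcard.
apply: (has_card_image (has_card_rcard F fX)) => [x y [Xx _] [Yy _]|y].
  exact: T_inj.
split=> [[[x Xx <-]] TxF | [x [Xx xF] <-]].
  by exists x => //; split; rewrite // -(eq_all_r (TX x Xx)).
by split; [exists x | rewrite (eq_all_r (TX x Xx))].
Qed.

Lemma approxU_equiv : equiv_on_W (approxU U).
Proof.
split=> [A fA|]; first by apply/approxU_rcard => //; apply: ultraW.
split=> [A B fA fB|A B C fA fB fC].
  by rewrite !approxU_rcard // => UAB; apply: (ultraS U_ultra UAB).
rewrite !approxU_rcard // => UAB UBC.
by apply: (ultraS U_ultra (ultraI U_ultra UAB UBC)) => F [-> ->].
Qed.

Lemma approxU_AP : AP (approxU U).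
Proof.
move=> A B fA fB.
have fAB : finitary (setD A B) by apply: finitary_sub fA => x [].
have fBA : finitary (setD B A) by apply: finitary_sub fB => x [].
rewrite !approxU_rcard //; suff eq_diff F :
    rcard A F = rcard B F <-> rcard (setD A B) F = rcard (setD B A) F.
  by split=> UAB; apply: (ultraS U_ultra UAB) => F /eq_diff.
rewrite /rcard !restrf_setD // -(cardfsID (restrf B F) (restrf A F)).
rewrite -[in #|` restrf B F|](cardfsID (restrf A F) (restrf B F)) fsetIC.
by split=> [/addnI|->].
Qed.

Lemma approxU_TP : TP (approxU U).
Proof.
move=> A T fA T_inj TA; apply: approxU_image => // x Ax.
exact: perm_mem (TA x Ax).
Qed.

Lemma approxU_natural : natural (approxU U).
Proof. exact: approxU_image. Qed.

Lemma approxU_UP : UP (approxU U).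
Proof.
move=> A n fA; apply: (ultraS U_ultra (U_fine n)) => F nF.
exists (rcard A F); split; last exact: has_card_rcard.
apply: (has_card_image (f := rcons^~ n) (has_card_rcard F fA)) => [x y _ _|z].
  exact: rcons_injl.
split=> [[[a [_ [Aa -> ->]]]] | [a [Aa aF] <-]].
  by rewrite all_cat cats1 => /andP[aF _]; exists a.
by split; [exists a, [:: n]; rewrite cats1 | rewrite -cats1 all_cat aF /= nF].
Qed.

Lemma approxU_PP : PP (approxU U).
Proof.
move=> A B A' B' _ _ _ _ AB_mul AB_mul' UAA' UBB'.
apply: (ultraS U_ultra (ultraI U_ultra UAA' UBB')) => F [[n [An A'n]] [m [Bm B'm]]].
by exists (n * m); split; apply: has_card_prodp.
Qed.

End CountingEquinumerosity.

Section Blocks.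
Variable K : choiceType.
Variable S : nat -> {fset K}.
Hypothesis S_nested : forall i j, (i <= j)%N -> S i `<=` S j.

Definition block j := S j `\` (if j is i.+1 then S i else fset0).

Lemma block_sub j : block j `<=` S j.
Proof. exact: fsubsetDl. Qed.

Lemma card_block j : #|` block j| = (#|` S j| - if j is i.+1 then #|` S i| else 0)%N.
Proof. by case: j => [|j]; rewrite cardfsDS ?fsub0set ?cardfs0 ?S_nested. Qed.

Lemma mem_nested_block x i j : x \in block i -> (x \in S j) = (i <= j)%N.
Proof.
rewrite in_fsetD => /andP[xNSi xSi]; case: leqP => [/S_nested/fsubsetP -> //|lt_ji].
apply: contraNF xNSi; case: i lt_ji {xSi} => //= i; rewrite ltnS => le_ji.
exact: (fsubsetP (S_nested le_ji)).
Qed.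

Lemma block_uniq x i j : x \in block i -> x \in block j -> i = j.
Proof.
move=> xi xj; apply/eqP; rewrite eqn_leq.
by rewrite -(mem_nested_block _ xi) -(mem_nested_block _ xj) !(fsubsetP (block_sub _)).
Qed.

Definition stage x :=
  if pselect (exists j, x \in S j) is left exS then ex_minn exS else 0.

Lemma mem_block_stage x j : x \in S j -> x \in block (stage x).
Proof.
move=> xSj; rewrite /stage; case: pselect => [exS|[]]; last by exists j.
case: ex_minnP => [[|s]] xSs s_min; rewrite in_fsetD xSs andbT //.
by apply/negP => /s_min; rewrite ltnn.
Qed.

Lemma stage_block x j : x \in block j -> stage x = j.
Proof.
move=> xj; apply: (block_uniq _ xj).
exact: (mem_block_stage (fsubsetP (block_sub j) x xj)).
Qed.

End Blocks.

Section BlockMap.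
Variable K : choiceType.
Variables S T : nat -> {fset K}.
Hypothesis S_nested : forall i j, (i <= j)%N -> S i `<=` S j.
Hypothesis T_nested : forall i j, (i <= j)%N -> T i `<=` T j.
Hypothesis card_block_le : forall j, (#|` block S j| <= #|` block T j|)%N.

Definition blockmap x :=
  nth x (enum_fset (block T (stage S x))) (index x (enum_fset (block S (stage S x)))).

Lemma blockmap_block x j : x \in block S j ->
  blockmap x \in block T j /\
  index (blockmap x) (enum_fset (block T j)) = index x (enum_fset (block S j)).
Proof.
move=> xj; rewrite /blockmap (stage_block S_nested xj).
have lt : (index x (enum_fset (block S j)) < size (enum_fset (block T j)))%N.
  by apply: leq_trans (card_block_le j); rewrite index_mem.
by rewrite mem_nth // index_uniq.
Qed.

Lemma mem_blockmap x i j : x \in S i -> (blockmap x \in T j) = (x \in S j).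
Proof.
move=> /mem_block_stage xs; have [fxs _] := blockmap_block xs.
by rewrite (mem_nested_block T_nested _ fxs) (mem_nested_block S_nested _ xs).
Qed.

Lemma blockmap_inj x y i j : x \in S i -> y \in S j -> blockmap x = blockmap y -> x = y.
Proof.
move=> /mem_block_stage xs /mem_block_stage ys fxy.
have [fxs ix] := blockmap_block xs; have [fys iy] := blockmap_block ys.
rewrite fxy in fxs ix; have es := block_uniq T_nested fxs fys; rewrite es in xs ix.
by rewrite -[LHS](nth_index x xs) -[RHS](nth_index x ys) -ix iy.
Qed.

Lemma blockmap_onto : (forall j, #|` block S j| = #|` block T j|) ->
  forall y j, y \in T j -> exists2 x, x \in S j & blockmap x = y.
Proof.
move=> card_block_eq y j yj; have ys := mem_block_stage yj; set s := stage T y in ys.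
have lt : (index y (enum_fset (block T s)) < size (enum_fset (block S s)))%N.
  by rewrite -/(#|` _|) card_block_eq index_mem.
pose x := nth y (enum_fset (block S s)) (index y (enum_fset (block T s))).
have xs : x \in block S s by apply: mem_nth.
exists x.
  by rewrite (mem_nested_block S_nested _ xs) -(mem_nested_block T_nested _ ys).
have [fxs ix] := blockmap_block xs; rewrite index_uniq // in ix.
by rewrite -[LHS](nth_index y fxs) -[RHS](nth_index y ys) ix.
Qed.

End BlockMap.

Section Transport.
Variable U : fsfamily.
Hypothesis U_ultra : is_ultrafilter U.
Hypothesis U_fine : is_fine U.
Variable P : fsets -> Prop.
Hypothesis UP : U P.
Hypothesis cP : fchain P.

Local Notation D := (fchain_enum U_ultra U_fine UP).

Lemma ultra_fchain_enum : U (fun F => exists j, F = D j).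
Proof. by apply: (ultraS U_ultra UP) => F /(fchain_enum_onto _ _ _ cP). Qed.

Lemma restrf_enum_nested X : finitary X ->
  forall i j, (i <= j)%N -> restrf X (D i) `<=` restrf X (D j).
Proof. by move=> fX i j /(fchain_enum_sub _ _ _ cP) DiDj; apply: restrf_sub. Qed.

Lemma restrf_enum_cover X x : finitary X -> X x -> exists j, x \in restrf X (D j).
Proof.
move=> fX Xx; have [j xD] := fchain_enum_cover U_ultra U_fine UP cP x.
by exists j; apply/(restrfP _ fX).
Qed.

Lemma card_block_restrf X j : finitary X ->
  #|` block (fun j => restrf X (D j)) j| =
  (rcard X (D j) - if j is i.+1 then rcard X (D i) else 0)%N.
Proof. by move=> fX; rewrite (card_block (restrf_enum_nested fX)). Qed.

Variables X Y : pset.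
Hypothesis fX : finitary X.
Hypothesis fY : finitary Y.
Let SX j := restrf X (D j).
Let SY j := restrf Y (D j).
Hypothesis card_block_le : forall j, (#|` block SX j| <= #|` block SY j|)%N.

Definition transport := blockmap SX SY.

Let SX_nested := restrf_enum_nested fX.
Let SY_nested := restrf_enum_nested fY.

Lemma mem_transport x i j : x \in SX i -> (transport x \in SY j) = (x \in SX j).
Proof. exact: (mem_blockmap (S := SX) (T := SY) SX_nested SY_nested card_block_le). Qed.

Lemma transport_in x : X x -> Y (transport x).
Proof.
move=> /(restrf_enum_cover fX) [j xj].
by have /(restrfP _ fY) [] : transport x \in SY j by rewrite (mem_transport _ xj).
Qed.

Lemma transport_inj : injective_on transport X.
Proof.
move=> x y /(restrf_enum_cover fX) [i xi] /(restrf_enum_cover fX) [j yj].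
exact: (blockmap_inj (S := SX) (T := SY) SX_nested SY_nested card_block_le xi yj).
Qed.

Lemma restr_image_transport j y : restr (image transport X) (D j) y <->
  exists2 x, restr X (D j) x & transport x = y.
Proof.
split=> [[[x Xx <-] xD] | [x xD <-]].
  have [i xi] := restrf_enum_cover fX Xx; exists x => //; apply/(restrfP _ fX).
  by rewrite -(mem_transport _ xi); apply/(restrfP _ fY); split=> //; apply: transport_in.
split; first by exists x => //; case: xD.
have /(restrfP _ fY) [] // : transport x \in SY j.
by have xj := proj1 (restrfP _ fX _) xD; rewrite (mem_transport _ xj).
Qed.

Lemma rcard_image_transport j : rcard (image transport X) (D j) = rcard X (D j).
Proof.
have fT : finitary (image transport X).
  by apply: finitary_sub fY => _ [x Xx <-]; apply: transport_in.
apply: rcardE fT _; apply: (has_card_image (has_card_rcard _ fX)) => [x y [Xx _] [Xy _]|y].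
  exact: transport_inj.
exact: restr_image_transport.
Qed.

Lemma transport_Ucongruence : (forall j, #|` block SX j| = #|` block SY j|) ->
  Ucongruence U transport X Y.
Proof.
move=> card_block_eq; split; [exact: transport_in | exact: transport_inj |].
apply: (ultraS U_ultra ultra_fchain_enum) => _ [j ->] y; split.
  move/(restrfP _ fY)/(blockmap_onto SX_nested SY_nested card_block_le card_block_eq).
  by case=> x /(restrfP _ fX) xD <-; exists x.
by case=> x /(restrfP _ fX) xj <-; apply/(restrfP _ fY); rewrite (mem_transport _ xj).
Qed.

End Transport.

Lemma rcard_lt_exists A B (F : fsets) : finitary A -> finitary B ->
  (rcard B F < rcard A F)%N -> exists x, A x /\ ~ B x.
Proof.
move=> fA fB; apply: contraPP => noAB; apply/negP; rewrite -leqNgt.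
apply/fsubset_leq_card/restrf_subpset => // x Ax.
by apply: contrapT => nBx; apply: noAB; exists x.
Qed.

Lemma rcard_proper A B (F : fsets) x : finitary A -> finitary B ->
  (forall y, B y -> A y) -> A x -> ~ B x -> all (fun i => i \in F) x ->
  (rcard B F < rcard A F)%N.
Proof.
move=> fA fB BA Ax nBx xF; apply/fproper_ltn_card; rewrite fproperEneq restrf_subpset // andbT.
apply/eqP => BFAF; have : x \in restrf A F by apply/(restrfP _ fA).
by rewrite -BFAF => /(restrfP _ fB) [].
Qed.

Section Equinumerosity.
Variable U : fsfamily.
Hypothesis U_ultra : is_ultrafilter U.
Hypothesis U_fine : is_fine U.
Hypothesis U_ramsey : is_ramsey U.

Lemma succ_rel_rcard A B : finitary A -> finitary B -> succ_rel (approxU U) A B ->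
  U (fun F => rcard B F < rcard A F)%N.
Proof.
move=> fA fB [A' [B' [fA' fB' [B'A' [x [A'x nB'x]]]]]].
rewrite !approxU_rcard // => UAA' UBB'.
apply: (ultraS U_ultra (ultraI U_ultra (ultraI U_ultra UAA' UBB') (fine_all U_ultra U_fine x))).
by move=> F [[-> ->] xF]; apply: rcard_proper xF.
Qed.

(* Choosing the chain so that [rcard A - rcard B] increases along it makes every block of
   [B] at most as large as the corresponding block of [A]; transporting [B] into [A]
   then gives the required proper subset of [A]. *)
Lemma rcard_succ_rel A B : finitary A -> finitary B ->
  U (fun F => rcard B F < rcard A F)%N -> succ_rel (approxU U) A B.
Proof.
move=> fA fB UBA; have [P0 UP0 cP0] := ramsey_fchain U_ultra U_fine U_ramsey.
have [Q UQ Q_mono] := ramsey_monotone U_ultra U_fine U_ramsey (fun F => rcard A F - rcard B F)%N.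
pose P F := (P0 F /\ Q F) /\ (rcard B F < rcard A F)%N.
have UP : U P by apply: (ultraI U_ultra (ultraI U_ultra UP0 UQ) UBA).
have cP : fchain P by apply: fchain_sub cP0 => F [[]].
pose D := fchain_enum U_ultra U_fine UP.
have PD j : P (D j) := fchain_enumP U_ultra U_fine UP j.
have SB_nested := restrf_enum_nested U_ultra U_fine UP cP fB.
have lt_BA j : (rcard B (D j) < rcard A (D j))%N by case: (PD j).
have card_block_le j :
    (#|` block (fun j => restrf B (D j)) j| <= #|` block (fun j => restrf A (D j)) j|)%N.
  rewrite !card_block_restrf // -/D; case: j => [|j]; first by rewrite !subn0 ltnW.
  have := Q_mono _ _ (PD j).1.2 (PD j.+1).1.2 (fchain_enum_card_lt U_ultra U_fine UP j).
  have : (rcard B (D j) <= rcard B (D j.+1))%N := fsubset_leq_card (SB_nested _ _ (leqnSn j)).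
  by have := lt_BA j; have := lt_BA j.+1; lia.
pose B' := image (transport U_ultra U_fine UP B A) B.
have B'A y : B' y -> A y by case=> x Bx <-; apply: (transport_in cP fB fA card_block_le).
have rcardB' j : rcard B' (D j) = rcard B (D j) := rcard_image_transport cP fB fA card_block_le j.
exists A, B'; split=> //; first exact: finitary_sub fA.
- by split=> //; apply: (rcard_lt_exists (F := D 0) fA (finitary_sub B'A fA)); rewrite rcardB'.
- exact: (approxU_equiv U_ultra).1.
- apply/approxU_rcard => //; first exact: finitary_sub fA.
  by apply: (ultraS U_ultra (ultra_fchain_enum U_ultra U_fine UP cP)) => _ [j ->].
Qed.

Lemma succ_relE A B : finitary A -> finitary B ->
  succ_rel (approxU U) A B <-> U (fun F => rcard B F < rcard A F)%N.
Proof. by move=> fA fB; split; [apply: succ_rel_rcard | apply: rcard_succ_rel]. Qed.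

Lemma ultra_trichotomy (f g : fsets -> nat) :
  [\/ U (fun F => f F = g F) /\ ~ U (fun F => g F < f F)%N /\ ~ U (fun F => f F < g F)%N,
      ~ U (fun F => f F = g F) /\ U (fun F => g F < f F)%N /\ ~ U (fun F => f F < g F)%N
    | ~ U (fun F => f F = g F) /\ ~ U (fun F => g F < f F)%N /\ U (fun F => f F < g F)%N].
Proof.
have disj := ultra_disjoint U_ultra.
have [Ueq|Une] := ultra_em U_ultra (fun F => f F = g F).
  by constructor 1; split=> //; split; apply: (disj _ _ Ueq) => F ->; rewrite ltnn.
have [Ugt|Ungt] := ultra_em U_ultra (fun F => g F < f F)%N.
  constructor 2; split; first by apply: (disj _ _ Ugt) => F + e; rewrite e ltnn.
  by split=> //; apply: (disj _ _ Ugt) => F lt1 lt2; have := ltn_trans lt1 lt2; rewrite ltnn.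
have Ult : U (fun F => f F < g F)%N.
  apply: (ultraS U_ultra (ultraI U_ultra Une Ungt)) => F [ne ngt].
  by rewrite ltn_neqAle leqNgt; apply/andP; split; [apply/eqP | apply/negP].
constructor 3; split; first by apply: (disj _ _ Ult) => F + e; rewrite e ltnn.
by split=> //; apply: (disj _ _ Ungt) => F; apply.
Qed.

Lemma approxU_ZP : ZP (approxU U).
Proof.
move=> A B fA fB; case: (ultra_trichotomy (rcard A) (rcard B)) => H;
  [constructor 1 | constructor 2 | constructor 3]; by rewrite approxU_rcard // !succ_relE.
Qed.

Lemma Ucongruence_approxU X Y tau : finitary X -> Ucongruence U tau X Y -> approxU U X Y.
Proof.
move=> fX [XY tau_inj UXY]; apply: (ultraS U_ultra UXY) => F XYF.
exists (rcard X F); split; first exact: has_card_rcard.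
by apply: (has_card_image (has_card_rcard F fX)) => // x y [Xx _] [Xy _]; apply: tau_inj.
Qed.

Lemma approxU_Ucongruence X Y : finitary X -> finitary Y -> approxU U X Y ->
  exists tau, Ucongruence U tau X Y.
Proof.
move=> fX fY /(approxU_rcard U_ultra fX fY) UXY.
have [P0 UP0 cP0] := ramsey_fchain U_ultra U_fine U_ramsey.
pose P F := P0 F /\ rcard X F = rcard Y F.
have UP : U P by apply: ultraI.
have cP : fchain P by apply: fchain_sub cP0 => F [].
pose D := fchain_enum U_ultra U_fine UP.
have rcard_eq j : rcard X (D j) = rcard Y (D j) by case: (fchain_enumP U_ultra U_fine UP j).
have card_block_eq j :
    #|` block (fun j => restrf X (D j)) j| = #|` block (fun j => restrf Y (D j)) j|.
  by rewrite !card_block_restrf // -/D; case: j => [|j]; rewrite !rcard_eq.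
have card_block_le j := eq_leq (card_block_eq j).
by exists (transport U_ultra U_fine UP X Y); apply: transport_Ucongruence.
Qed.

End Equinumerosity.

Lemma fchain_card_factor (U : fsfamily) (P : fsets -> Prop) (h : fsets -> nat) :
  is_ultrafilter U -> U P -> fchain P -> exists f : nat -> nat, U (fun F => f #|` F| = h F).
Proof.
move=> U_ultra UP cP.
exists (fun n =>
  if pselect (exists F, P F /\ #|` F| = n) is left exF then h (sval (cid exF)) else 0).
apply: (ultraS U_ultra UP) => F PF; case: pselect => [exF|[]]; last by exists F.
by case: (cid exF) => G [PG eGF] /=; rewrite (fchain_card_inj cP PG PF eGF).
Qed.

Section PrefixLimit.
Variable L : nat -> seq nat.
Hypothesis L_prefix : forall j, exists t, L j.+1 = L j ++ t.
Hypothesis L_uniq : forall j, uniq (L j).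
Hypothesis L_size : forall j, (j <= size (L j))%N.
Hypothesis L_cover : forall i, exists j, i \in L j.

Definition prefix_limit n := nth 0 (L n.+1) n.

Lemma L_prefix_le i j : (i <= j)%N -> exists t, L j = L i ++ t.
Proof.
move=> /subnK <-; elim: (j - i)%N => [|k [t IHk]]; first by exists [::]; rewrite cats0.
by have [t' ->] := L_prefix (k + i); exists (t ++ t'); rewrite IHk catA.
Qed.

Lemma nth_L_le i j n : (i <= j)%N -> (n < size (L i))%N -> nth 0 (L j) n = nth 0 (L i) n.
Proof. by move=> /L_prefix_le [t ->] lt; rewrite nth_cat lt. Qed.

Lemma prefix_limitE j n : (n < size (L j))%N -> prefix_limit n = nth 0 (L j) n.
Proof.
move=> lt; have [le|lt'] := leqP j n.+1; first exact: nth_L_le.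
by rewrite (nth_L_le (ltnW lt')) // (L_size n.+1).
Qed.

Lemma map_prefix_limit j : map prefix_limit (iota 0 (size (L j))) = L j.
Proof.
rewrite -[RHS](mkseq_nth 0) /mkseq; apply/eq_in_map => n.
by rewrite mem_iota => /andP[_ lt]; apply: prefix_limitE.
Qed.

Lemma prefix_limit_onto i : exists n, prefix_limit n == i.
Proof.
have [j iL] := L_cover i; exists (index i (L j)).
by rewrite (prefix_limitE (j := j)) ?nth_index ?index_mem.
Qed.

Lemma prefix_limit_bij : bijective prefix_limit.
Proof.
have pl_inj : injective prefix_limit.
  move=> a b; pose j := (maxn a b).+1.
  have [lt_a lt_b] : (a < size (L j))%N /\ (b < size (L j))%N.
    by split; apply: leq_trans (L_size j); rewrite ltnS ?leq_maxl ?leq_maxr.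
  by rewrite !(prefix_limitE (j := j)) // => /eqP; rewrite nth_uniq // => /eqP.
exists (fun i => xchoose (prefix_limit_onto i)) => [n|i].
  by apply: pl_inj; apply/eqP/(xchooseP (prefix_limit_onto _)).
exact/eqP/(xchooseP (prefix_limit_onto i)).
Qed.

End PrefixLimit.

Lemma eq_evalF S (p q : pred nat) v : p =1 q -> evalF S p v -> evalF S q v.
Proof.
move=> pq [L [uL Lp pL ->]]; exists L; split=> // s; first by rewrite -(eq_all pq); apply: Lp.
by rewrite -(eq_all pq); apply: pL.
Qed.

Section ChainOrder.
Variable U : fsfamily.
Hypothesis U_ultra : is_ultrafilter U.
Hypothesis U_fine : is_fine U.
Variable P : fsets -> Prop.
Hypothesis UP : U P.
Hypothesis cP : fchain P.

Local Notation D := (fchain_enum U_ultra U_fine UP).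
Let D_nested := fchain_enum_sub U_ultra U_fine UP cP.

Fixpoint fchain_seq j : seq nat :=
  (if j is i.+1 then fchain_seq i else [::]) ++ enum_fset (block D j).

Lemma mem_fchain_seq j : fchain_seq j =i D j.
Proof.
elim: j => [|j IHj] x /=; first by rewrite in_fsetD in_fset0.
rewrite mem_cat IHj in_fsetD; case: (boolP (x \in D j)) => //= xj.
by rewrite (fsubsetP (D_nested (leqnSn j))).
Qed.

Lemma fchain_seq_uniq j : uniq (fchain_seq j).
Proof.
elim: j => [|j IHj] /=; first exact: fset_uniq.
rewrite cat_uniq IHj fset_uniq andbT /=; apply/hasPn => x.
by rewrite in_fsetD mem_fchain_seq => /andP[].
Qed.

Lemma size_fchain_seq j : size (fchain_seq j) = #|` D j|.
Proof.
apply/perm_size/uniq_perm; rewrite ?fchain_seq_uniq ?fset_uniq // => x.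
by rewrite mem_fchain_seq.
Qed.

Lemma fchain_seq_prefix j : exists t, fchain_seq j.+1 = fchain_seq j ++ t.
Proof. by eexists. Qed.

Lemma size_fchain_seq_ge j : (j <= size (fchain_seq j))%N.
Proof. by rewrite size_fchain_seq fchain_enum_card_ge. Qed.

Lemma fchain_seq_cover i : exists j, i \in fchain_seq j.
Proof.
have [j] := fchain_enum_cover U_ultra U_fine UP cP [:: i].
by rewrite /= andbT -mem_fchain_seq; exists j.
Qed.

Definition fchain_order := prefix_limit fchain_seq.

Let fchain_orderE := prefix_limitE fchain_seq_prefix size_fchain_seq_ge.
Let map_fchain_order := map_prefix_limit fchain_seq_prefix size_fchain_seq_ge.

Lemma fchain_order_bij : bijective fchain_order.
Proof.
exact: prefix_limit_bij fchain_seq_prefix fchain_seq_uniq size_fchain_seq_ge fchain_seq_cover.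
Qed.

Lemma evalF_fchain_order (S : series) : U (fun F => evalF S (fun i => i \in F) 0%R) ->
  forall k, exists m,
    (forall i, (i <= k)%N -> exists2 j, (j <= m)%N & fchain_order j = i) /\
    evalF S (fun i => i \in map fchain_order (iota 0 m.+1)) 0%R.
Proof.
move=> US k.
have [F [[PF SF] /allP kF]] := ultra_ex U_ultra (ultraI U_ultra (ultraI U_ultra UP US)
  (fine_all U_ultra U_fine (iota 0 k.+1))).
have [j eF] := fchain_enum_onto U_ultra U_fine UP cP PF; rewrite {}eF in SF kF.
have kL i : (i <= k)%N -> i \in fchain_seq j.
  by rewrite mem_fchain_seq => ik; apply: kF; rewrite mem_iota.
have size_gt0 : (0 < size (fchain_seq j))%N by case: (fchain_seq j) (kL 0 isT).
exists (size (fchain_seq j)).-1; rewrite prednK // map_fchain_order; split; last first.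
  by apply: eq_evalF SF => i; rewrite mem_fchain_seq.
move=> i /kL iL; exists (index i (fchain_seq j)); first by rewrite -ltnS prednK // index_mem.
by rewrite /fchain_order (fchain_orderE (j := j)) ?nth_index ?index_mem.
Qed.

End ChainOrder.

Theorem corollary3p2 (U : fsfamily) :
  is_ultrafilter U -> is_fine U -> is_ramsey U ->
  [/\
   (* approxU is a natural equinumerosity *)
   equinumerosity (approxU U) /\ natural (approxU U),
   (* N^(N^<w)/U is isomorphic (as ordered semiring) to N^N/sigmaU *)
   (exists Phi : (nat -> nat) -> (fsets -> nat),
      [/\ forall f g, sigmaU U (fun n => f n = g n) <-> U (fun F => Phi f F = Phi g F),
          forall f g, sigmaU U (fun n => f n <= g n)%N <->
                      U (fun F => Phi f F <= Phi g F)%N,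
          forall f g, U (fun F => Phi (fun n => f n + g n)%N F = Phi f F + Phi g F)%N,
          forall f g, U (fun F => Phi (fun n => f n * g n)%N F = Phi f F * Phi g F)%N
        & forall h : fsets -> nat, exists f, U (fun F => Phi f F = h F)]),
   (* characterization by U-congruences *)
   (forall X Y, finitary X -> finitary Y ->
      (approxU U X Y <-> exists tau, Ucongruence U tau X Y))
 & (* asymptotic after a reordering of N *)
   exists pi : nat -> nat, bijective pi /\
     forall S : series, inR S -> U (fun F => evalF S (fun i => i \in F) 0%R) ->
       forall k, exists m,
         (forall i, (i <= k)%N -> exists2 j, (j <= m)%N & pi j = i) /\
         evalF S (fun i => i \in map pi (iota 0 m.+1)) 0%R].
Proof.
move=> U_ultra U_fine U_ramsey; have [P UP cP] := ramsey_fchain U_ultra U_fine U_ramsey.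
split.
- split; last exact: approxU_natural.
  split; [exact: approxU_equiv | exact: approxU_AP | exact: approxU_ZP | exact: approxU_TP |].
  by split; [apply: approxU_UP | apply: approxU_PP].
- exists (fun f F => f #|` F|); split=> // [f g|f g|h]; try exact: ultraW.
  exact: fchain_card_factor UP cP.
- move=> X Y fX fY; split; first exact: approxU_Ucongruence.
  by case=> tau; apply: Ucongruence_approxU.
- exists (fchain_order U_ultra U_fine UP); split; first exact: fchain_order_bij.
  by move=> S _; apply: evalF_fchain_order.
Qed.
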